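(* Let $k$ be an algebraically closed field of characteristic $2$, $S=\mathbf{V}(g)\subset\mathbb{A}^3$ with $g = x^2+y^2z+yz^2+xyz$, and $m\ge 5$. Let $R_m = k[x_0,\dots,x_m,y_0,\dots,y_m,z_0,\dots,z_m]$, $(\mathbb{A}^3)_m=\mathrm{Spec}\,R_m$, and define $g^{(j)}\in R_m$ by $g(\sum_{i=0}^m x_it^i,\sum_{i=0}^m y_it^i,\sum_{i=0}^m z_it^i)=\sum_{j=0}^m g^{(j)}t^j$ in $R_m[t]/\langle t^{m+1}\rangle$. Let $S_m^0=\mathbf{V}(x_0,y_0,z_0,g^{(0)},\dots,g^{(m)})$ be the singular fiber of the $m$-th jet scheme of $S$. Define $I_m^0 = \langle x_0,x_1,x_2,y_0,y_1,z_0,z_1\rangle + \langle g^{(0)},\dots,g^{(m)}\rangle$, $I_m^1 = J_m^1 (R_m)_{z_1}\cap R_m$, $I_m^2 = J_m^2 (R_m)_{y_1}\cap R_m$, $I_m^3 = J_m^3 (R_m)_{y_1}\cap R_m$, where $J_m^1 = \langle x_0,x_1,y_0,y_1,z_0\rangle + \langle g^{(0)},\dots,g^{(m)}\rangle$, $J_m^2 = \langle x_0,x_1,y_0,z_0,z_1\rangle + \langle g^{(0)},\dots,g^{(m)}\rangle$, $J_m^3 = \langle x_0,x_1,y_0,z_0,y_1+z_1\rangle + \langle g^{(0)},\dots,g^{(m)}\rangle$, and $Z_m^i=\mathbf{V}(I_m^i)$ for $i=0,1,2,3$ (these are the irreducible components of $S_m^0$). Then the maximal elements of $\{Z_m^i\cap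 Z_m^j\mid i,j\in\{0,1,2,3\},\ i\ne j\}$ with respect to inclusion are $Z_m^0\cap Z_m^1$, $Z_m^0\cap Z_m^2$ and $Z_m^0\cap Z_m^3$, and they are pairwise distinct. In particular, $Z_m^1\cap Z_m^2,\ Z_m^2\cap Z_m^3,\ Z_m^3\cap Z_m^1\subsetneq Z_m^0$.
   Context: $(R_m)_h$ is the localization at powers of $h$, $J(R_m)_h\cap R_m$ the preimage in $R_m$ of the extended ideal, and $\mathbf{V}(\cdot)$ the zero set in $(\mathbb{A}^3)_m$. *)

From mathcomp Require Import all_boot all_algebra.
From mathcomp Require Import mpoly.
Set Implicit Arguments. Unset Strict Implicit. Unset Printing Implicit Defensive.
Import GRing.Theory.
Local Open Scope ring_scope.

Section JetDefs.
Variable (k : closedFieldType) (m : nat).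

Definition nvar : nat := (3 * m.+1)%N.
Definition Rm := {mpoly k[nvar]}.

Definition xv (i : nat) : Rm := 'X_(inord i).
Definition yv (i : nat) : Rm := 'X_(inord (m.+1 + i)).
Definition zv (i : nat) : Rm := 'X_(inord (2 * m.+1 + i)).

Definition arc (v : nat -> Rm) : {poly Rm} := \sum_(i < m.+1) (v i)%:P * 'X^i.

Definition garc : {poly Rm} :=
  let X := arc xv in let Y := arc yv in let Z := arc zv in
  X ^+ 2 + Y ^+ 2 * Z + Y * Z ^+ 2 + X * Y * Z.

(* g^(j): coefficient of t^j (for j <= m this is the coefficient in R_m[t]/<t^(m+1)>) *)
Definition gj (j : nat) : Rm := garc`_j.

Definition gjs : seq Rm := [seq gj j | j <- iota 0 m.+1].

Definition in_ideal (s : seq Rm) (f : Rm) : Prop :=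
  exists c : 'I_(size s) -> Rm, f = \sum_(i < size s) c i * s`_i.

(* J (R_m)_h \cap R_m : the saturation of <s> by h *)
Definition in_sat (s : seq Rm) (h f : Rm) : Prop :=
  exists e : nat, in_ideal s (h ^+ e * f).

Definition I0 : Rm -> Prop :=
  in_ideal ([:: xv 0; xv 1; xv 2; yv 0; yv 1; zv 0; zv 1] ++ gjs).
Definition J1 : seq Rm := [:: xv 0; xv 1; yv 0; yv 1; zv 0] ++ gjs.
Definition J2 : seq Rm := [:: xv 0; xv 1; yv 0; zv 0; zv 1] ++ gjs.
Definition J3 : seq Rm := [:: xv 0; xv 1; yv 0; zv 0; yv 1 + zv 1] ++ gjs.
Definition I1 : Rm -> Prop := in_sat J1 (zv 1).
Definition I2 : Rm -> Prop := in_sat J2 (yv 1).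
Definition I3 : Rm -> Prop := in_sat J3 (yv 1).

Definition Iideal (i : 'I_4) : Rm -> Prop :=
  match val i with 0 => I0 | 1 => I1 | 2 => I2 | _ => I3 end.

(* k-points of (A^3)_m = Spec R_m *)
Definition point := 'I_nvar -> k.

Definition zeroset (I : Rm -> Prop) : point -> Prop :=
  fun v => forall f, I f -> f.@[v] = 0.

Definition Z (i : 'I_4) : point -> Prop := zeroset (Iideal i).

Definition ZZ (i j : 'I_4) : point -> Prop := fun v => Z i v /\ Z j v.

End JetDefs.

Definition psubset (T : Type) (A B : T -> Prop) := forall v, A v -> B v.
Definition pseteq (T : Type) (A B : T -> Prop) := forall v, A v <-> B v.

Definition maximal_pair (T : Type) (F : 'I_4 -> 'I_4 -> T -> Prop) (A : T -> Prop) :=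
  (exists i j, i <> j /\ pseteq A (F i j)) /\
  (forall i j, i <> j -> psubset A (F i j) -> pseteq (F i j) A).

From Pilot Require Import Defs.
From mathcomp Require Import all_boot all_algebra.
From mathcomp Require Import mpoly.
From mathcomp Require Import ring zify.
Set Implicit Arguments. Unset Strict Implicit. Unset Printing Implicit Defensive.
Import GRing.Theory.
Local Open Scope ring_scope.

(* With h_1 = z_1 and h_2 = h_3 = y_1, Z^i (i = 1, 2, 3) is the closure of
   V(J^i) \ V(h_i), so a point p lies on Z^i as soon as some line through p
   stays in V(J^i) \ V(h_i) away from p: along the line every element of the
   saturation restricts to a polynomial in t vanishing on k^*, hence at p.
   In characteristic 2 and modulo the linear generators of J^i, the coefficient
   g^(5) equals h_i f_i, so f_i lies in I^i; likewise g^(4) equals x_2^2 modulo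
   x_0, x_1, y_0, y_1, z_0, z_1, which is why any two of Z^1, Z^2, Z^3 meet
   inside Z^0.  The arcs with x = 0 and (y, z) = (0, t^2), (t^2, 0), (t^2, t^2)
   lie on Z^0 and on exactly one of Z^1, Z^2, Z^3 (the f_i tell them apart);
   the statement about maximal pairwise intersections then follows formally. *)

Definition geval (A : comNzRingType) (x y z : A) : A :=
  x ^+ 2 + y ^+ 2 * z + y * z ^+ 2 + x * y * z.

Lemma rmorph_geval (A B : comNzRingType) (f : {rmorphism A -> B}) x y z :
  f (geval x y z) = geval (f x) (f y) (f z).
Proof. by rewrite /geval !rmorphD !rmorphXn !rmorphM. Qed.

Section CoefficientsOfG.
Variable S : comNzRingType.

Definition cauchy (u w : nat -> S) (j : nat) : S :=
  \sum_(a < j.+1) u a * w (j - a)%N.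

Definition gcoef (u v w : nat -> S) (j : nat) : S :=
  cauchy u u j + cauchy (cauchy v v) w j + cauchy v (cauchy w w) j
  + cauchy (cauchy u v) w j.

Section Congruence.
Variable r : S -> S -> Prop.
Hypotheses (r0 : r 0 0)
  (rD : forall a a' b b', r a a' -> r b b' -> r (a + b) (a' + b'))
  (rM : forall a a' b b', r a a' -> r b b' -> r (a * b) (a' * b')).

Lemma cauchy_congr u u' w w' j :
  (forall i, (i <= j)%N -> r (u i) (u' i)) ->
  (forall i, (i <= j)%N -> r (w i) (w' i)) ->
  r (cauchy u w j) (cauchy u' w' j).
Proof.
move=> ru rw; apply: (big_ind2 r) => // a _.
by apply: rM; [apply: ru; rewrite -ltnS | apply: rw; rewrite leq_subr].
Qed.

Lemma gcoef_congr u u' v v' w w' j :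
  (forall i, (i <= j)%N -> r (u i) (u' i)) ->
  (forall i, (i <= j)%N -> r (v i) (v' i)) ->
  (forall i, (i <= j)%N -> r (w i) (w' i)) ->
  r (gcoef u v w j) (gcoef u' v' w' j).
Proof.
move=> ru rv rw.
have low f f' i : (forall i, (i <= j)%N -> r (f i) (f' i)) -> (i <= j)%N ->
    forall l, (l <= i)%N -> r (f l) (f' l).
  by move=> rf hi l hl; apply: rf; apply: leq_trans hi.
by do !apply: rD; do !apply: cauchy_congr => // i hi;
  apply: cauchy_congr; apply: low.
Qed.

End Congruence.

Lemma eq_gcoef u u' v v' w w' j :
  (forall i, (i <= j)%N -> u i = u' i) ->
  (forall i, (i <= j)%N -> v i = v' i) ->
  (forall i, (i <= j)%N -> w i = w' i) ->
  gcoef u v w j = gcoef u' v' w' j.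
Proof. by apply: gcoef_congr => // a a' b b' -> ->. Qed.

Lemma coefM_cauchy (p q : {poly S}) j :
  (p * q)`_j = cauchy (nth 0 p) (nth 0 q) j.
Proof. exact: coefM. Qed.

Lemma coef_geval (X Y Z : {poly S}) j :
  (geval X Y Z)`_j = gcoef (nth 0 X) (nth 0 Y) (nth 0 Z) j.
Proof.
rewrite /geval /gcoef !expr2 !coefD !coefM_cauchy.
by congr (_ + _ + _ + _); apply: eq_bigr => a _; rewrite ?coefM_cauchy.
Qed.

End CoefficientsOfG.

Definition meet2 (T : Type) (Zc : 'I_4 -> T -> Prop) (i j : 'I_4) : T -> Prop :=
  fun v => Zc i v /\ Zc j v.

Lemma maximal_pair_eq (T : Type) (F : 'I_4 -> 'I_4 -> T -> Prop) A B :
  pseteq A B -> maximal_pair F B -> maximal_pair F A.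
Proof.
move=> AB [[i [j [ij Bij]]] maxB]; split.
  by exists i, j; split => // v; rewrite AB.
by move=> i' j' ij' sub v; rewrite AB; apply: maxB => // w /AB /sub.
Qed.

Section MeetsOverOneComponent.
Variables (T : Type) (Zc : 'I_4 -> T -> Prop) (o : 'I_4).
Hypothesis meet_sub :
  forall i j : 'I_4, i != o -> j != o -> i != j -> psubset (meet2 Zc i j) (Zc o).
Hypothesis witness : forall i : 'I_4, i != o ->
  exists p, Zc o p /\ Zc i p /\ forall j : 'I_4, Zc j p -> j = o \/ j = i.

Lemma meet_subset_o (i j : 'I_4) : i != j -> psubset (meet2 Zc i j) (Zc o).
Proof.
move=> ij v [Zi Zj].
have [<- //|io] := eqVneq i o; have [<- //|jo] := eqVneq j o.
exact: (meet_sub io jo ij).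
Qed.

Lemma maximal_meet_o (i : 'I_4) : i != o -> maximal_pair (meet2 Zc) (meet2 Zc o i).
Proof.
move=> io; split; first by exists o, i; split => // oi; rewrite oi eqxx in io.
move=> i' j' ij' sub v; split; last exact: sub.
have [p [Po [Pi Ponly]]] := witness io.
have [/Ponly Pi' /Ponly Pj'] := sub p (conj Po Pi).
by case: Pi' Pj' ij' => -> [] -> // _ [].
Qed.

Lemma meet_o_inj (i j : 'I_4) : i != o -> j != o ->
  pseteq (meet2 Zc o i) (meet2 Zc o j) -> i = j.
Proof.
move=> io jo Eij; have [p [Po [Pi Ponly]]] := witness io.
have [_ /Ponly [jo'|//]] := (Eij p).1 (conj Po Pi).
by rewrite jo' eqxx in jo.
Qed.

Lemma maximal_meet_oP A : maximal_pair (meet2 Zc) A ->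
  exists2 i, i != o & pseteq A (meet2 Zc o i).
Proof.
move=> [[i [j [ij EA]]] maxA].
have [io|io] := eqVneq i o.
  by exists j; [apply/eqP => jo; apply: ij; rewrite io jo | rewrite -io].
exists i => //; have sub : psubset A (meet2 Zc o i).
  move=> v /EA [Zi Zj]; split => //.
  by apply: (meet_subset_o (i := i) (j := j)) => //; apply/eqP.
have oi : o <> i by move=> oi; rewrite oi eqxx in io.
by move=> v; split => [/sub //|/(maxA o i oi sub v)].
Qed.

Lemma meet_neq_o (i j : 'I_4) : i != o -> j != o -> i != j ->
  ~ pseteq (meet2 Zc i j) (Zc o).
Proof.
move=> io jo ij E; have [p [Po [Pi Ponly]]] := witness io.
have [_ /Ponly [jo'|ji]] := (E p).2 Po.
  by rewrite jo' eqxx in jo.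
by rewrite ji eqxx in ij.
Qed.

End MeetsOverOneComponent.

Definition zero_below (V : nmodType) (n : nat) (u : nat -> V) (i : nat) : V :=
  if (i < n)%N then 0 else u i.

Section JetScheme.
Variables (k : closedFieldType) (m : nat).

Local Notation R := (Rm k m).
Local Notation xv := (xv k m).
Local Notation yv := (yv k m).
Local Notation zv := (zv k m).
Local Notation gj := (gj k m).
Local Notation gjs := (gjs k m).
Local Notation in_ideal := (@in_ideal k m).
Local Notation point := (point k m).
Local Notation Z := (@Z k m).
Local Notation I0 := (@I0 k m).
Local Notation I1 := (@I1 k m).
Local Notation I2 := (@I2 k m).
Local Notation I3 := (@I3 k m).
Local Notation arc := (@Defs.arc k m).

Lemma in_ideal0 s : in_ideal s 0.
Proof. by exists (fun=> 0); rewrite big1 // => i _; rewrite mul0r. Qed.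

Lemma in_idealD s f g : in_ideal s f -> in_ideal s g -> in_ideal s (f + g).
Proof.
move=> [c ->] [d ->]; exists (fun i => c i + d i).
by rewrite -big_split; apply: eq_bigr => i _; rewrite mulrDl.
Qed.

Lemma in_idealMl s a f : in_ideal s f -> in_ideal s (a * f).
Proof.
move=> [c ->]; exists (fun i => a * c i).
by rewrite mulr_sumr; apply: eq_bigr => i _; rewrite mulrA.
Qed.

Lemma in_idealN s f : in_ideal s f -> in_ideal s (- f).
Proof. by rewrite -mulN1r; apply: in_idealMl. Qed.

Lemma mem_in_ideal s f : f \in s -> in_ideal s f.
Proof.
move=> fs; have fi : (index f s < size s)%N by rewrite index_mem.
exists (fun i => (i == Ordinal fi)%:R).
rewrite (bigD1 (Ordinal fi)) //= eqxx mul1r nth_index //.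
by rewrite big1 ?addr0 // => i /negbTE ->; rewrite mul0r.
Qed.

Definition eqmod (s : seq R) (a b : R) : Prop := in_ideal s (a - b).

Lemma eqmod_refl s a : eqmod s a a.
Proof. by rewrite /eqmod subrr; apply: in_ideal0. Qed.

Lemma eqmodD s a a' b b' :
  eqmod s a a' -> eqmod s b b' -> eqmod s (a + b) (a' + b').
Proof. by move=> ha hb; rewrite /eqmod opprD addrACA; apply: in_idealD. Qed.

Lemma eqmodM s a a' b b' :
  eqmod s a a' -> eqmod s b b' -> eqmod s (a * b) (a' * b').
Proof.
rewrite /eqmod => ha hb; have -> : a * b - a' * b' = a * (b - b') + b' * (a - a') by ring.
by apply: in_idealD; apply: in_idealMl.
Qed.

Lemma eqmod_zero_below s n u i :
  (forall l, (l < n)%N -> u l \in s) -> eqmod s (u i) (zero_below n u i).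
Proof.
rewrite /zero_below; case: ifP => [/[swap] us /us /mem_in_ideal|_ _].
  by rewrite /eqmod subr0.
exact: eqmod_refl.
Qed.

Lemma arcE u : arc u = \poly_(i < m.+1) u i.
Proof. by rewrite poly_def; apply: eq_bigr => j _; rewrite mul_polyC. Qed.

Lemma garcE : garc k m = geval (arc xv) (arc yv) (arc zv).
Proof. by []. Qed.

Lemma gjE j : (j <= m)%N -> gj j = gcoef xv yv zv j.
Proof.
move=> jm; rewrite /gj garcE coef_geval; apply: eq_gcoef => i ij;
  by rewrite arcE coef_poly ltnS (leq_trans ij jm).
Qed.

Lemma in_ideal_gcoef s u v w j : (j <= m)%N -> gj j \in s ->
  (forall i, (i <= j)%N -> eqmod s (xv i) (u i)) ->
  (forall i, (i <= j)%N -> eqmod s (yv i) (v i)) ->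
  (forall i, (i <= j)%N -> eqmod s (zv i) (w i)) ->
  in_ideal s (gcoef u v w j).
Proof.
move=> jm gs ru rv rw.
have : eqmod s (gcoef xv yv zv j) (gcoef u v w j).
  by apply: gcoef_congr ru rv rw; [exact: eqmod_refl | exact: eqmodD | exact: eqmodM].
rewrite -gjE // /eqmod => gjd.
rewrite -[gcoef _ _ _ _](subKr (gj j)).
by apply: in_idealD; [exact: mem_in_ideal | exact: in_idealN].
Qed.

Lemma mem_gjs j : (j <= m)%N -> gj j \in gjs.
Proof. by move=> jm; rewrite map_f // mem_iota. Qed.

Definition all_vanish (v : point) (s : seq R) : bool := all (fun f => f.@[v] == 0) s.

Lemma all_vanish_cat v s1 s2 :
  all_vanish v (s1 ++ s2) = all_vanish v s1 && all_vanish v s2.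
Proof. exact: all_cat. Qed.

Lemma all_vanish_eq v v' s : v =1 v' -> all_vanish v s = all_vanish v' s.
Proof. by move=> vv'; apply: eq_all => f; rewrite (meval_eq _ vv'). Qed.

Lemma zeroset_in_ideal s v : all_vanish v s -> zeroset (in_ideal s) v.
Proof.
move=> /allP s0 f [c ->]; rewrite rmorph_sum big1 // => i _.
by rewrite rmorphM /= (eqP (s0 _ (mem_nth 0 (ltn_ord i)))) mulr0.
Qed.

Lemma all_vanish_gjsP v :
  reflect (forall j, (j <= m)%N -> (gj j).@[v] = 0) (all_vanish v gjs).
Proof.
apply: (iffP allP) => [g0 j jm | g0 f /mapP[j]].
  by apply/eqP/g0; rewrite map_f // mem_iota.
by rewrite mem_iota => jm ->; rewrite g0.
Qed.

Definition line (p w : point) (t : k) : point := fun j => p j + t * w j.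

Lemma meval_line_poly (f : R) p w :
  exists P : {poly k}, forall t, P.[t] = f.@[line p w t].
Proof.
exists (\sum_(e <- msupp f) (f@_e)%:P *
   \prod_(i < nvar m) ((p i)%:P + (w i)%:P * 'X) ^+ (e i)) => t.
rewrite mevalE horner_sum; apply: eq_bigr => e _.
rewrite hornerCM horner_prod; congr (_ * _); apply: eq_bigr => i _.
by rewrite horner_exp hornerD hornerC hornerCM hornerX mulrC.
Qed.

Lemma root0_of_nonzero_roots (P : {poly k}) :
  (forall t, t != 0 -> P.[t] = 0) -> P.[0] = 0.
Proof.
move=> P0; case: (eqVneq P 0) => [->|nzP]; first by rewrite horner0.
have sizeP : size (P * 'X + 1) = (size P).+1.
  by rewrite size_polyDl size_mulX // size_poly1 ltnS lt0n size_poly_eq0.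
have : size (P * 'X + 1) != 1%N by rewrite sizeP eqSS size_poly_eq0.
(* a root of P * 'X + 1 is nonzero, hence a root of P: absurd *)
case/closed_rootP => t /rootP; rewrite hornerD hornerMX hornerC.
have [->|nzt] := eqVneq t 0; first by rewrite mulr0 add0r => /eqP; rewrite oner_eq0.
by rewrite P0 // mul0r add0r => /eqP; rewrite oner_eq0.
Qed.

Lemma zeroset_in_sat_line s h p w :
  (forall t, t != 0 -> all_vanish (line p w t) s && (h.@[line p w t] != 0)) ->
  zeroset (in_sat s h) p.
Proof.
move=> onV f [e fe]; have [P Pf] := meval_line_poly f p w.
have : P.[0] = 0.
  apply: root0_of_nonzero_roots => t /onV /andP[/zeroset_in_ideal/(_ _ fe)].
  rewrite Pf rmorphM rmorphXn /= => /eqP; rewrite mulf_eq0 expf_eq0.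
  by case/orP => [/andP[_ ->] | /eqP].
by rewrite Pf; under meval_eq do rewrite /line mul0r addr0.
Qed.

Definition mkpt (px py pz : nat -> k) : point := fun i =>
  let n := nat_of_ord i in
  if (n < m.+1)%N then px n else if (n < 2 * m.+1)%N then py (n - m.+1)%N
  else pz (n - 2 * m.+1)%N.

Lemma val_inord_nvar i : (i < 3 * m.+1)%N -> nat_of_ord (inord i : 'I_(nvar m)) = i.
Proof. by move=> hi; rewrite inordK // /nvar; lia. Qed.

Lemma meval_xv px py pz i : (i <= m)%N -> (xv i).@[mkpt px py pz] = px i.
Proof.
move=> im; rewrite /Defs.xv mevalXU /mkpt val_inord_nvar; last lia.
by rewrite ifT //; lia.
Qed.

Lemma meval_yv px py pz i : (i <= m)%N -> (yv i).@[mkpt px py pz] = py i.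
Proof.
move=> im; rewrite /Defs.yv mevalXU /mkpt val_inord_nvar; last lia.
rewrite ifF; last lia. rewrite ifT; last lia. congr py; lia.
Qed.

Lemma meval_zv px py pz i : (i <= m)%N -> (zv i).@[mkpt px py pz] = pz i.
Proof.
move=> im; rewrite /Defs.zv mevalXU /mkpt val_inord_nvar; last lia.
rewrite ifF; last lia. rewrite ifF; last lia. congr pz; lia.
Qed.

Definition karc (c : nat -> k) : {poly k} := \poly_(i < m.+1) c i.

Lemma map_arc v u : map_poly (meval v) (arc u) = karc (fun i => (u i).@[v]).
Proof.
apply/polyP => i; rewrite coef_map /= arcE !coef_poly.
by case: ifP => // _; rewrite meval0.
Qed.

Lemma meval_gj v j : (gj j).@[v] =
  (geval (karc (fun i => (xv i).@[v])) (karc (fun i => (yv i).@[v]))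
         (karc (fun i => (zv i).@[v])))`_j.
Proof.
rewrite /gj garcE -coef_map rmorph_geval.
by congr ((geval _ _ _ : {poly k})`_j); apply: map_arc.
Qed.

Lemma meval_gj_mkpt px py pz j :
  (gj j).@[mkpt px py pz] = (geval (karc px) (karc py) (karc pz) : {poly k})`_j.
Proof.
rewrite meval_gj /karc; congr ((geval _ _ _ : {poly k})`_j); apply: eq_poly => i;
  by rewrite ltnS; first [exact: meval_xv | exact: meval_yv | exact: meval_zv].
Qed.

Lemma zeroset_in_sat_mem (s : seq R) h v f :
  zeroset (in_sat s h) v -> f \in s -> f.@[v] = 0.
Proof. by move=> Zv fs; apply: Zv; exists 0%N; rewrite expr0 mul1r; apply: mem_in_ideal. Qed.

Lemma zeroset_in_sat_gjs (lin : seq R) h v :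
  zeroset (in_sat (lin ++ gjs) h) v -> all_vanish v gjs.
Proof.
move=> Zv; apply/allP => f fg; apply/eqP/(zeroset_in_sat_mem Zv).
by rewrite mem_cat fg orbT.
Qed.

Hypotheses (hk : 2%N \in [pchar k]) (hm : (5 <= m)%N).

Lemma mulr2n_char2 (A : lmodType k) (x : A) : x *+ 2 = 0.
Proof. by rewrite -scaler_nat (pcharf0 hk) scale0r. Qed.

Definition f1 : R := yv 2 * (yv 2 + xv 2) + zv 1 * yv 3.
Definition f2 : R := zv 2 * (zv 2 + xv 2) + yv 1 * zv 3.
Definition f3 : R :=
  (zv 2 - yv 2) * (zv 2 + yv 2 + xv 2) - yv 1 * (yv 3 + zv 3 + xv 3).

(* the z_i reduced modulo z_0 and y_1 + z_1 *)
Definition zv_J3 (i : nat) : R := if i == 1%N then - yv 1 else zero_below 1 zv i.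

Ltac expand_gcoef := rewrite /gcoef /cauchy !big_ord_recr !big_ord0 /= /zero_below /=.

(* [ring] works over Z, where the two sides differ by twice the given term. *)
Lemma gcoef5_J1 :
  gcoef (zero_below 2 xv) (zero_below 2 yv) (zero_below 1 zv) 5 = zv 1 * f1.
Proof.
rewrite -[RHS]addr0 -(mulr2n_char2 (xv 2 * xv 3 + yv 2 * zv 1 * zv 2)).
by expand_gcoef; rewrite /f1; ring.
Qed.

Lemma gcoef5_J2 :
  gcoef (zero_below 2 xv) (zero_below 1 yv) (zero_below 2 zv) 5 = yv 1 * f2.
Proof.
rewrite -[RHS]addr0 -(mulr2n_char2 (xv 2 * xv 3 + yv 1 * yv 2 * zv 2)).
by expand_gcoef; rewrite /f2; ring.
Qed.

Lemma gcoef5_J3 : gcoef (zero_below 2 xv) (zero_below 1 yv) zv_J3 5 = yv 1 * f3.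
Proof.
rewrite -[RHS]addr0 -(mulr2n_char2 (xv 2 * xv 3)).
by rewrite /zv_J3; expand_gcoef; rewrite /f3; ring.
Qed.

Lemma gcoef4_Z0 :
  gcoef (zero_below 2 xv) (zero_below 2 yv) (zero_below 2 zv) 4 = xv 2 ^+ 2.
Proof. by expand_gcoef; ring. Qed.

Lemma f1_in_I1 : I1 f1.
Proof.
exists 1%N; rewrite expr1 -gcoef5_J1.
apply: in_ideal_gcoef => //; first by rewrite mem_cat mem_gjs ?orbT.
all: by move=> i _; apply: eqmod_zero_below => -[|[|]] // _; rewrite !inE eqxx ?orbT.
Qed.

Lemma f2_in_I2 : I2 f2.
Proof.
exists 1%N; rewrite expr1 -gcoef5_J2.
apply: in_ideal_gcoef => //; first by rewrite mem_cat mem_gjs ?orbT.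
all: by move=> i _; apply: eqmod_zero_below => -[|[|]] // _; rewrite !inE eqxx ?orbT.
Qed.

Lemma f3_in_I3 : I3 f3.
Proof.
exists 1%N; rewrite expr1 -gcoef5_J3.
apply: in_ideal_gcoef => //; first by rewrite mem_cat mem_gjs ?orbT.
1, 2: by move=> i _; apply: eqmod_zero_below => -[|[|]] // _; rewrite !inE eqxx ?orbT.
move=> i _; rewrite /zv_J3; case: eqP => [->|_].
  by rewrite /eqmod opprK addrC; apply: mem_in_ideal; rewrite !inE eqxx ?orbT.
by apply: eqmod_zero_below => -[|[|]] // _; rewrite !inE eqxx ?orbT.
Qed.

Lemma x2_sq_in_ideal :
  in_ideal [:: xv 0; xv 1; yv 0; yv 1; zv 0; zv 1; gj 4] (xv 2 ^+ 2).
Proof.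
rewrite -gcoef4_Z0; apply: in_ideal_gcoef; first exact: ltnW.
  by rewrite !inE eqxx ?orbT.
all: by move=> i _; apply: eqmod_zero_below => -[|[|]] // _; rewrite !inE eqxx ?orbT.
Qed.

Lemma zeroset_I0 v :
  (xv 0).@[v] = 0 -> (xv 1).@[v] = 0 -> (yv 0).@[v] = 0 -> (yv 1).@[v] = 0 ->
  (zv 0).@[v] = 0 -> (zv 1).@[v] = 0 -> all_vanish v gjs -> zeroset I0 v.
Proof.
move=> x0 x1 y0 y1 z0 z1 g0.
have x2 : (xv 2).@[v] = 0.
  have : all_vanish v ([:: xv 0; xv 1; yv 0; yv 1; zv 0; zv 1] ++ [:: gj 4]).
    have g4 : (gj 4).@[v] = 0 by move/all_vanish_gjsP: g0; apply; exact: ltnW.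
    by rewrite /all_vanish /= x0 x1 y0 y1 z0 z1 g4 eqxx.
  move/zeroset_in_ideal/(_ _ x2_sq_in_ideal).
  by rewrite rmorphXn /= => /eqP; rewrite expf_eq0 => /andP[_ /eqP].
apply: zeroset_in_ideal; rewrite all_vanish_cat g0 andbT /all_vanish /=.
by rewrite x0 x1 x2 y0 y1 z0 z1 eqxx.
Qed.

Lemma Z1_Z2_sub_Z0 v : zeroset I1 v -> zeroset I2 v -> zeroset I0 v.
Proof.
move=> Z1 Z2; have g0 := zeroset_in_sat_gjs Z1.
move/zeroset_in_sat_mem in Z1; move/zeroset_in_sat_mem in Z2.
apply: zeroset_I0 => //; last by apply: Z2; rewrite !inE eqxx ?orbT.
all: by apply: Z1; rewrite !inE eqxx ?orbT.
Qed.

Lemma Z2_Z3_sub_Z0 v : zeroset I2 v -> zeroset I3 v -> zeroset I0 v.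
Proof.
move=> Z2 Z3; have g0 := zeroset_in_sat_gjs Z2.
move/zeroset_in_sat_mem in Z2; move/zeroset_in_sat_mem in Z3.
have z1 : (zv 1).@[v] = 0 by apply: Z2; rewrite !inE eqxx ?orbT.
have : (yv 1 + zv 1).@[v] = 0 by apply: Z3; rewrite !inE eqxx ?orbT.
rewrite mevalD z1 addr0 => y1.
by apply: zeroset_I0 => //; apply: Z2; rewrite !inE eqxx ?orbT.
Qed.

Lemma Z3_Z1_sub_Z0 v : zeroset I3 v -> zeroset I1 v -> zeroset I0 v.
Proof.
move=> Z3 Z1; have g0 := zeroset_in_sat_gjs Z1.
move/zeroset_in_sat_mem in Z1; move/zeroset_in_sat_mem in Z3.
have y1 : (yv 1).@[v] = 0 by apply: Z1; rewrite !inE eqxx ?orbT.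
have : (yv 1 + zv 1).@[v] = 0 by apply: Z3; rewrite !inE eqxx ?orbT.
rewrite mevalD y1 add0r => z1.
by apply: zeroset_I0 => //; apply: Z1; rewrite !inE eqxx ?orbT.
Qed.

Definition delta (n i : nat) : k := if i == n then 1 else 0.

Definition yz_point (b c : bool) (s : nat -> k) : point :=
  mkpt (fun=> 0) (if b then s else fun=> 0) (if c then s else fun=> 0).

Lemma meval_gj_yz_point b c s j : (gj j).@[yz_point b c s] = 0.
Proof.
rewrite meval_gj_mkpt.
have karc0 : karc (fun=> 0) = 0.
  by apply/polyP => i; rewrite coef_poly coef0; case: ifP.
have geval0 (Y Z : {poly k}) : geval 0 Y Z = Y * Z * (Y + Z) by rewrite /geval; ring.
case: b c => [] []; rewrite karc0 geval0 ?(mul0r, mulr0) ?coef0 //.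
have -> : karc s + karc s = 0 by rewrite -mulr2n mulr2n_char2.
by rewrite mulr0 coef0.
Qed.

Lemma line_yz_point b c s s' t :
  line (yz_point b c s) (yz_point b c s') t
  =1 yz_point b c (fun i => s i + t * s' i).
Proof.
move=> i; rewrite /line /yz_point /mkpt.
by case: b c => [] []; do 2?case: ifP => _; rewrite ?mulr0 ?addr0.
Qed.

Lemma zeroset_yz_point_in_sat (lin : seq R) h b c :
  (forall t, t != 0 ->
     let q := yz_point b c (fun i => delta 2 i + t * delta 1 i) in
     all_vanish q lin && (h.@[q] != 0)) ->
  zeroset (in_sat (lin ++ gjs) h) (yz_point b c (delta 2)).
Proof.
move=> onV; apply: (zeroset_in_sat_line (w := yz_point b c (delta 1))) => t /onV /=.
rewrite (all_vanish_eq _ (line_yz_point _ _ _ _ _)) (meval_eq _ (line_yz_point _ _ _ _ _)).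
move=> /andP[lin0 h0]; rewrite all_vanish_cat lin0 h0 andbT /=.
by apply/all_vanish_gjsP => j _; apply: meval_gj_yz_point.
Qed.

(* zv before yv before xv: [xv i] also unifies with [yv j] and [zv j]. *)
Ltac eval_at_yz_point :=
  rewrite /yz_point ?(mevalD, mevalN, mevalB, mevalM, rmorphXn)
    ?meval_zv ?meval_yv ?meval_xv /delta /=; try by apply: leq_trans hm.

Lemma zeroset_yz_point_I0 b c : zeroset I0 (yz_point b c (delta 2)).
Proof.
apply: zeroset_I0; last by apply/all_vanish_gjsP => j _; apply: meval_gj_yz_point.
all: by eval_at_yz_point; case: b c => [] [].
Qed.

Lemma zeroset_yz_point_I1 : zeroset I1 (yz_point false true (delta 2)).
Proof.
apply: zeroset_yz_point_in_sat => t t0 /=.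
by eval_at_yz_point; rewrite !mulr0 !addr0 add0r mulr1 eqxx t0.
Qed.

Lemma zeroset_yz_point_I2 : zeroset I2 (yz_point true false (delta 2)).
Proof.
apply: zeroset_yz_point_in_sat => t t0 /=.
by eval_at_yz_point; rewrite !mulr0 !addr0 add0r mulr1 eqxx t0.
Qed.

Lemma zeroset_yz_point_I3 : zeroset I3 (yz_point true true (delta 2)).
Proof.
apply: zeroset_yz_point_in_sat => t t0 /=.
by eval_at_yz_point; rewrite !mulr0 !addr0 add0r mulr1 addrr_pchar2 // eqxx t0.
Qed.

Lemma yz_point_notin_Z1 c : ~ zeroset I1 (yz_point true c (delta 2)).
Proof.
move/(_ _ f1_in_I1)/eqP; apply/negP; rewrite /f1; eval_at_yz_point.
by case: c; rewrite ?(mul0r, mulr0, addr0, mul1r) oner_eq0.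
Qed.

Lemma yz_point_notin_Z2 b : ~ zeroset I2 (yz_point b true (delta 2)).
Proof.
move/(_ _ f2_in_I2)/eqP; apply/negP; rewrite /f2; eval_at_yz_point.
by case: b; rewrite ?(mul0r, mulr0, addr0, mul1r) oner_eq0.
Qed.

Lemma yz_point_notin_Z3 b c : b != c -> ~ zeroset I3 (yz_point b c (delta 2)).
Proof.
move=> bc /(_ _ f3_in_I3)/eqP; apply/negP; rewrite /f3; eval_at_yz_point.
by case: b c bc => [] [] //= _;
  rewrite ?(mul0r, mulr0, addr0, add0r, subr0, sub0r, mul1r, mulr1) ?oppr_eq0 oner_eq0.
Qed.

Lemma ord4P (i : 'I_4) : [\/ i = inord 0, i = inord 1, i = inord 2 | i = inord 3].
Proof.
case: i => -[|[|[|[|n]]]] // i4;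
  [constructor 1 | constructor 2 | constructor 3 | constructor 4];
  by apply: ord_inj; rewrite inordK.
Qed.

Lemma inord4_neq a b : (a < 4)%N -> (b < 4)%N -> a != b -> inord a != inord b :> 'I_4.
Proof.
by move=> a4 b4; apply: contra => /eqP/(congr1 (@nat_of_ord 4)); rewrite !inordK // => ->.
Qed.

Lemma Z_inord n : (n < 4)%N ->
  Z (inord n) = zeroset (match n with 0 => I0 | 1 => I1 | 2 => I2 | _ => I3 end).
Proof. by move=> n4; rewrite /Z /Iideal (_ : val _ = n) //; exact: inordK. Qed.

Lemma Z_meet_sub (i j : 'I_4) : i != inord 0 -> j != inord 0 -> i != j ->
  psubset (meet2 Z i j) (Z (inord 0)).
Proof.
move=> + + + v [].
case: (ord4P i) (ord4P j) => -> [] ->; rewrite ?eqxx // !Z_inord //= => _ _ _ Zi Zj.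
all: first [ exact: Z1_Z2_sub_Z0 Zi Zj | exact: Z1_Z2_sub_Z0 Zj Zi
           | exact: Z2_Z3_sub_Z0 Zi Zj | exact: Z2_Z3_sub_Z0 Zj Zi
           | exact: Z3_Z1_sub_Z0 Zi Zj | exact: Z3_Z1_sub_Z0 Zj Zi ].
Qed.

Lemma Z_witness (i : 'I_4) : i != inord 0 -> exists p,
  Z (inord 0) p /\ Z i p /\ forall j, Z j p -> j = inord 0 \/ j = i.
Proof.
have only (p : point) a : (forall j, j != inord 0 -> j != a -> ~ Z j p) ->
    forall j, Z j p -> j = inord 0 \/ j = a.
  move=> out j Zj; case: (eqVneq j (inord 0)) => [|j0]; [by left | right].
  by apply/eqP; apply: contraT => ja; case: (out j j0 ja Zj).
case: (ord4P i) => ->; rewrite ?eqxx // => _.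
- exists (yz_point false true (delta 2)); rewrite !Z_inord //=.
  split; [exact: zeroset_yz_point_I0 | split; [exact: zeroset_yz_point_I1 | apply: only]].
  move=> j; case: (ord4P j) => ->; rewrite ?eqxx // Z_inord //= => _ _.
  + exact: yz_point_notin_Z2.
  + exact: yz_point_notin_Z3.
- exists (yz_point true false (delta 2)); rewrite !Z_inord //=.
  split; [exact: zeroset_yz_point_I0 | split; [exact: zeroset_yz_point_I2 | apply: only]].
  move=> j; case: (ord4P j) => ->; rewrite ?eqxx // Z_inord //= => _ _.
  + exact: yz_point_notin_Z1.
  + exact: yz_point_notin_Z3.
- exists (yz_point true true (delta 2)); rewrite !Z_inord //=.
  split; [exact: zeroset_yz_point_I0 | split; [exact: zeroset_yz_point_I3 | apply: only]].
  move=> j; case: (ord4P j) => ->; rewrite ?eqxx // Z_inord //= => _ _.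
  + exact: yz_point_notin_Z1.
  + exact: yz_point_notin_Z2.
Qed.

End JetScheme.

Theorem theorem4p13 (k : closedFieldType) (hk : 2%N \in [pchar k]) (m : nat)
    (hm : (5 <= m)%N) :
  let W := ZZ (k := k) (m := m) in
  let i0 : 'I_4 := inord 0 in let i1 : 'I_4 := inord 1 in
  let i2 : 'I_4 := inord 2 in let i3 : 'I_4 := inord 3 in
  (forall A, maximal_pair W A <->
     (pseteq A (W i0 i1) \/ pseteq A (W i0 i2) \/ pseteq A (W i0 i3))) /\
  ~ pseteq (W i0 i1) (W i0 i2) /\ ~ pseteq (W i0 i2) (W i0 i3) /\
  ~ pseteq (W i0 i1) (W i0 i3) /\
  (psubset (W i1 i2) (Z i0) /\ ~ pseteq (W i1 i2) (Z (m := m) i0)) /\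
  (psubset (W i2 i3) (Z i0) /\ ~ pseteq (W i2 i3) (Z (m := m) i0)) /\
  (psubset (W i3 i1) (Z i0) /\ ~ pseteq (W i3 i1) (Z (m := m) i0)).
Proof.
move=> W i0 i1 i2 i3; rewrite {}/W {}/i0 {}/i1 {}/i2 {}/i3.
change (ZZ (m:=m)) with (meet2 (@Z k m)).
have sub := @Z_meet_sub k m hm; have wit := @Z_witness k m hk hm.
have n10 : inord 1 != inord 0 :> 'I_4 by apply: inord4_neq.
have n20 : inord 2 != inord 0 :> 'I_4 by apply: inord4_neq.
have n30 : inord 3 != inord 0 :> 'I_4 by apply: inord4_neq.
have n12 : inord 1 != inord 2 :> 'I_4 by apply: inord4_neq.
have n23 : inord 2 != inord 3 :> 'I_4 by apply: inord4_neq.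
have n31 : inord 3 != inord 1 :> 'I_4 by apply: inord4_neq.
split.
  move=> A; split.
    case/(maximal_meet_oP sub) => i; case: (ord4P i) => ->; rewrite ?eqxx // => _ EA;
      by [left | right; left | right; right].
  case=> [E|[E|E]]; apply: (maximal_pair_eq E).
  - exact: (maximal_meet_o wit n10).
  - exact: (maximal_meet_o wit n20).
  - exact: (maximal_meet_o wit n30).
split; first by move/(meet_o_inj wit n10 n20)/eqP; rewrite (negbTE n12).
split; first by move/(meet_o_inj wit n20 n30)/eqP; rewrite (negbTE n23).
split; first by move/(meet_o_inj wit n10 n30)/eqP; rewrite eq_sym (negbTE n31).
split; first by split; [exact: (meet_subset_o sub n12) | exact: (meet_neq_o wit n10 n20 n12)].
split; first by split; [exact: (meet_subset_o sub n23) | exact: (meet_neq_o wit n20 n30 n23)].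
by split; [exact: (meet_subset_o sub n31) | exact: (meet_neq_o wit n30 n10 n31)].
Qed.
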